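(* There is a comeager set of $\alpha\in 2^{(2^{<\mathbb N})^{<\mathbb N}\times\mathbb N\times\mathbb N}$ such that for all $x,y\in(2^{\mathbb N})^{\mathbb N}$ with $x$ separated and $y$ injective and separated, the following hold (with $\gamma=\gamma_\alpha$): (i) for every finite partial function $\tau\colon N\to\{0,1\}$ there are infinitely many $(t,k)\in N$ such that the function $(s,d)\mapsto\gamma(y)(t,k)(s,d)$ extends $\tau$; (ii) for all finite partial functions $\tau_1,\tau_2\colon N\to\{0,1\}$ there are infinitely many $(s,d)\in N$ such that $(t,k)\mapsto\gamma(y)(t,k)(s,d)$ extends $\tau_1$ and $(t,k)\mapsto\gamma(x)(s,d)(t,k)$ extends $\tau_2$.
   Context: $\mathbb N=\{0,1,2,\dots\}$; $N=\mathbb N^{<\mathbb N}\times\mathbb N$, where $\mathbb N^{<\mathbb N}$ is the set of finite sequences of naturals. The space $2^{(2^{<\mathbb N})^{<\mathbb N}\times\mathbb N\times\mathbb N}$ has the product topology (the index set is countable and discrete). For $z\in 2^{\mathbb N}$ and $t=(t_1,\dots,t_l)\in\mathbb N^{<\mathbb N}$, $z\circ t=(z(t_1),\dots,z(t_l))\in 2^{<\mathbb N}$. Given $\alpha$, define $\gamma_\alpha\colon(2^{\mathbb N})^{\mathbb N}\to(2^N)^N$ by: for $x\in(2^{\mathbb N})^{\mathbb N}$, $s=(s_1,\dots,s_m)$, $t\in\mathbb N^{<\mathbb N}$, $d,k\in\mathbb N$: $\gamma_\alpha(x)(s,d)(t,k)=\alpha\big((x(s_1)\circ t,\dots,x(s_m)\circ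 t),k,d\big)$. A sequence $a\in(2^{\mathbb N})^{\mathbb N}$ is injective if $a(i)\ne a(j)$ for $i\ne j$, and separated if for all distinct $n,k\in\mathbb N$ there is $i$ with $a(i)(n)\ne a(i)(k)$. *)

From mathcomp Require Import all_boot all_order.
From mathcomp Require Import all_classical all_reals topology.
Set Implicit Arguments. Unset Strict Implicit. Unset Printing Implicit Defensive.
Local Open Scope classical_set_scope.

Definition Nidx := (seq nat * nat)%type.

(* The index set (2^{<N})^{<N} x N x N, and the space of alpha's:
   functions from it to bool, with the product topology of discrete bool
   (the canonical topology of function spaces in MathComp-Analysis). *)
Definition Aidx := (seq (seq bool) * nat * nat)%type.
Definition Aspace : topologicalType := {ptws Aidx -> bool}.

Definition comeager (T : topologicalType) (A : set T) : Prop :=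
  exists F : nat -> set T,
    (forall n, open (F n) /\ dense (F n)) /\ \bigcap_n F n `<=` A.

Definition compose_seq (z : nat -> bool) (t : seq nat) : seq bool := map z t.

Definition gamma (alpha : Aspace) (x : nat -> nat -> bool) :
    Nidx -> Nidx -> bool :=
  fun sd tk =>
    alpha ((map (fun si => compose_seq (x si) tk.1) sd.1, tk.2), sd.2).

Definition injective_seq (a : nat -> nat -> bool) : Prop :=
  forall i j, i <> j -> a i <> a j.

Definition separated_seq (a : nat -> nat -> bool) : Prop :=
  forall n k, n <> k -> exists i, a i n <> a i k.

Definition finite_partial (tau : Nidx -> option bool) : Prop :=
  finite_set [set p | tau p <> None].

Definition extends (f : Nidx -> bool) (tau : Nidx -> option bool) : Prop :=
  forall p b, tau p = Some b -> f p = b.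

From mathcomp Require Import all_boot all_order.
From mathcomp Require Import all_classical all_reals topology.
Set Implicit Arguments. Unset Strict Implicit. Unset Printing Implicit Defensive.
Local Open Scope classical_set_scope.

(* Call alpha generic when, for every finite list of values prescribed at the
   positions (u, d, k) and (u, k, d) indexed by keys (u, k), arbitrarily large
   d realise all of them at once; generic alphas form a countable intersection
   of dense open sets. For a finite partial tau, finitely many coordinates of y
   (resp. x) separate the naturals occurring in its domain. Indexing gamma by
   them gives distinct points of the domain distinct keys, so tau becomes one
   such list of prescriptions and genericity yields infinitely many d. *)

Lemma comeagerS (T : topologicalType) (A B : set T) :
  A `<=` B -> comeager A -> comeager B.
Proof. by move=> AB [F [FP FA]]; exists F; split=> // a /FA /AB. Qed.

Lemma comeager_bigcap (T : topologicalType) (C : countType) (G : C -> set T) :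
  (forall c, open (G c) /\ dense (G c)) -> comeager (\bigcap_c G c).
Proof.
move=> GP; exists (fun n => if unpickle n is Some c then G c else setT); split.
  move=> n; case: (unpickle n) => [c|]; first exact: GP.
  by split; [exact: openT | move=> O [o Oo] _; exists o].
by move=> a aF c _; have := aF (pickle c) I; rewrite pickleK.
Qed.

Lemma dense_approx (I : choiceType) (A : set {ptws I -> bool}) :
  (forall g, exists2 f : nat -> {ptws I -> bool}, forall j, A (f j)
     & forall i, \forall j \near \oo, f j i = g i) -> dense A.
Proof.
move=> approx O [g Og] oO; have [f Af fg] := approx g.
have f_cvg : f @ \oo --> (g : {ptws I -> bool}).
  apply/(@pointwise_cvgP (discrete_topology I) bool) => i.
  by apply: cvg_near_cst; rewrite near_map; exact: fg.
have [j _ /(_ j (leqnn j)) Ofj] : \forall j \near \oo, O (f j).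
  by apply: f_cvg; apply: open_nbhs_nbhs.
by exists (f j).
Qed.

Lemma open_constraints (I K : eqType) (pos : K -> I) (val : K -> bool)
    (s : seq K) :
  open [set a : {ptws I -> bool} | {in s, forall k, a (pos k) = val k}].
Proof.
elim: s => [|k s IHs].
  rewrite (_ : [set a | _] = setT); first exact: openT.
  by apply/seteqP; split.
rewrite (_ : [set a | _] = proj (pos k) @^-1` [set val k] `&`
   [set a : {ptws I -> bool} | {in s, forall k, a (pos k) = val k}]).
  apply: openI IHs; apply: open_comp; last exact: discrete_open.
  by move=> a _; exact: proj_continuous.
apply/seteqP; split=> [a ak|a [/= ak as_]].
  by split=> [|k' k's]; apply: ak; rewrite inE ?eqxx ?k's ?orbT.
by move=> k'; rewrite inE => /predU1P[->|/as_].
Qed.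

Lemma unbounded_infinite (T : eqType) (A : set T) (f : T -> nat) :
  (forall n, exists2 p, A p & n <= f p) -> infinite_set A.
Proof.
move=> unbounded /finite_seqP[s sA].
have [p Ap] := unbounded (\max_(q <- s) f q).+1.
apply/negP; rewrite -leqNgt leq_bigmax_seq //.
by move: Ap; rewrite sA.
Qed.

Definition separates (F : nat -> nat -> bool) (W E : seq nat) :=
  {in E &, forall a b, a != b -> exists2 i, i \in W & F i a != F i b}.

Lemma separatesS F W W' E :
  {subset W <= W'} -> separates F W E -> separates F W' E.
Proof.
by move=> WW' sepW a b aE bE /(sepW a b aE bE)[i /WW' iW' Fi]; exists i.
Qed.

Lemma finite_separates F E :
  (forall a b, a != b -> exists i, F i a != F i b) -> exists W, separates F W E.
Proof.
move=> sepF.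
have /choice[w wP] : forall ab : nat * nat,
    exists i, ab.1 != ab.2 -> F i ab.1 != F i ab.2.
  move=> [a b] /=.
  have [->|/sepF[i Fi]] := eqVneq a b; first by exists 0; rewrite eqxx.
  by exists i.
exists [seq w (a, b) | a <- E, b <- E] => a b aE bE ab.
by exists (w (a, b)); [exact: allpairs_f | exact: (wP (a, b))].
Qed.

Lemma separated_seq_neq x :
  separated_seq x -> forall a b, a != b -> exists i, x i a != x i b.
Proof. by move=> sep_x a b /eqP/sep_x[i /eqP]; exists i. Qed.

Lemma injective_seq_neq y :
  injective_seq y -> forall a b, a != b -> exists i, y a i != y b i.
Proof.
move=> inj_y a b /eqP/inj_y yab; apply: contrapT => yeq; apply: yab.
by apply/funext => i; apply/eqP/negPn/negP => ?; apply: yeq; exists i.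
Qed.

(* [gamma alpha F p q] is convertible to [alpha (code F p.1 q.1, q.2, p.2)]. *)
Definition code (F : nat -> nat -> bool) (rows cols : seq nat) :=
  [seq map (F i) cols | i <- rows].

Lemma code_inj_rows F cols E :
  separates (fun j i => F i j) cols E ->
  {in [pred rows | all [in E] rows] &, injective (code F ^~ cols)}.
Proof.
move=> sepE; apply: inj_in_map => a b aE bE /eq_in_map eqF.
apply/eqP/negP => /negP/(sepE a b aE bE)[j jc].
by rewrite eqF // eqxx.
Qed.

Lemma code_inj_cols F rows E i0 :
  i0 \in rows -> separates F rows E ->
  {in [pred cols | all [in E] cols] &, injective (code F rows)}.
Proof.
move=> i0r sepE s s'; rewrite !inE => /allP sE /allP s'E /eq_in_map eqF.
have eq_size : size s = size s'.
  by have /(congr1 size) := eqF i0 i0r; rewrite !size_map.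
apply: (eq_from_nth (x0 := 0) eq_size) => j js.
have js' : j < size s' by rewrite -eq_size.
apply/eqP/negP => /negP/(sepE _ _ (sE _ (mem_nth 0 js)) (s'E _ (mem_nth 0 js'))).
case=> i ir; rewrite -(nth_map 0 false) // -(nth_map 0 false (F i) js').
by rewrite eqF // eqxx.
Qed.

Definition Key := (seq (seq bool) * nat)%type.

Lemma key_inj_in (c : seq nat -> seq (seq bool)) (D : seq Nidx) :
  {in [pred s | all [in flatten (map fst D)] s] &, injective c} ->
  {in D &, injective (fun p : Nidx => (c p.1, p.2) : Key)}.
Proof.
move=> inj_c [s k] [s' k'] sD s'D [/inj_c eq_s ->]; rewrite eq_s // inE.
  by apply/allP => i i_s; apply/flatten_mapP; exists (s, k).
by apply/allP => i i_s'; apply/flatten_mapP; exists (s', k').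
Qed.

(* Only the first occurrence of a key counts, so every list of prescriptions is
   consistent; this is what makes [generic_at] dense. *)
Fixpoint lookup (l : seq (Key * bool)) (key : Key) : bool :=
  if l is (key', b) :: l' then (if key' == key then b else lookup l' key)
  else false.

Lemma lookup_map (T : eqType) (key : T -> Key) (val : T -> bool) (D : seq T) p :
  {in D &, injective key} -> p \in D ->
  lookup [seq (key q, val q) | q <- D] (key p) = val p.
Proof.
elim: D => // q D IHD inj_key; rewrite inE => /predU1P[->|pD] /=.
  by rewrite eqxx.
have [/inj_key eq_qp|_] := eqVneq (key q) (key p).
  by rewrite eq_qp ?inE ?eqxx ?pD ?orbT.
by apply: IHD pD => a b aD bD; apply: inj_key; rewrite inE ?aD ?bD orbT.
Qed.

Definition agrees (a : Aspace) (pos : Key -> Aidx) (l : seq (Key * bool)) :=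
  {in map fst l, forall key, a (pos key) = lookup l key}.

Definition mid_slot d (key : Key) : Aidx := (key.1, d, key.2).
Definition end_slot d (key : Key) : Aidx := (key.1, key.2, d).

Definition generic_at (l1 l2 : seq (Key * bool)) m : set Aspace :=
  [set a | exists2 d, m <= d &
     agrees a (mid_slot d) l1 /\ agrees a (end_slot d) l2].

Definition generic (a : Aspace) := forall l1 l2 m, generic_at l1 l2 m a.

Lemma open_generic_at l1 l2 m : open (generic_at l1 l2 m).
Proof.
rewrite (_ : generic_at _ _ _ = \bigcup_(d in [set d | m <= d])
   ([set a | agrees a (mid_slot d) l1] `&` [set a | agrees a (end_slot d) l2])).
  by apply: bigcup_open => d _; apply: openI; exact: open_constraints.
by apply/seteqP; split=> a [d md agr]; exists d.
Qed.

Definition patch (a0 : Aspace) l1 l2 d : Aspace := fun i =>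
  let: (u, x, z) := i in
  if (x == d) && ((u, z) \in map fst l1) then lookup l1 (u, z)
  else if (z == d) && ((u, x) \in map fst l2) then lookup l2 (u, x)
  else a0 i.

(* Bounding the keys of [l2] below [d] keeps the two slot families apart. *)
Lemma patch_agrees a0 l1 l2 d : {in map fst l2, forall key, key.2 < d} ->
  agrees (patch a0 l1 l2 d) (mid_slot d) l1 /\
  agrees (patch a0 l1 l2 d) (end_slot d) l2.
Proof.
move=> l2_lt; split=> -[u k] ukl /=; first by rewrite eqxx ukl.
by rewrite eqxx ukl (ltn_eqF (l2_lt _ ukl)).
Qed.

Lemma patch_far a0 l1 l2 d u x z : x < d -> z < d ->
  patch a0 l1 l2 d (u, x, z) = a0 (u, x, z).
Proof. by move=> xd zd /=; rewrite (ltn_eqF xd) (ltn_eqF zd). Qed.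

Lemma dense_generic_at l1 l2 m : dense (generic_at l1 l2 m).
Proof.
pose K := \max_(kb <- l2) kb.1.2.
apply: dense_approx => a0; exists (fun j => patch a0 l1 l2 (m + K + j).+1).
  move=> j; exists (m + K + j).+1; first by rewrite leqW // -addnA leq_addr.
  apply: patch_agrees => key /mapP[kb kbl ->]; rewrite ltnS.
  apply: leq_trans (@leq_bigmax_seq _ l2 xpredT (fun kb => kb.1.2) kb kbl isT) _.
  by rewrite -addnA addnCA leq_addr.
move=> [[u x] z]; near=> j.
have xzj : x + z < j by near: j; exact: nbhs_infty_gt.
by rewrite patch_far // ltnS (leq_trans _ (leq_addl _ _)) // ltnW //;
  apply: leq_ltn_trans xzj; rewrite ?leq_addr ?leq_addl.
Unshelve. all: by end_near.
Qed.

Lemma comeager_generic : comeager generic.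
Proof.
pose G (c : seq (Key * bool) * seq (Key * bool) * nat) :=
  generic_at c.1.1 c.1.2 c.2.
apply: (@comeagerS _ (\bigcap_c G c)); last first.
  apply: comeager_bigcap => c.
  by split; [exact: open_generic_at | exact: dense_generic_at].
by move=> a aG l1 l2 m; exact: (aG (l1, l2, m)).
Qed.

Lemma finite_partial_dom (tau : Nidx -> option bool) : finite_partial tau ->
  exists D : seq Nidx, forall p b, tau p = Some b -> p \in D.
Proof.
move=> /finite_seqP[D domD]; exists D => p b taup.
have : [set p | tau p <> None] p by rewrite /= taup.
by rewrite domD.
Qed.

Lemma agrees_extends (a : Aspace) pos (key : Nidx -> Key)
    (tau : Nidx -> option bool) (D : seq Nidx) :
  (forall p b, tau p = Some b -> p \in D) -> {in D &, injective key} ->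
  agrees a pos [seq (key p, odflt false (tau p)) | p <- D] ->
  extends (fun p => a (pos (key p))) tau.
Proof.
move=> domD inj_key agr p b taup; have pD := domD p b taup.
by rewrite agr -?map_comp ?(map_f key pD) // lookup_map // taup.
Qed.

Lemma generic_infinite_extensions (a : Aspace) y (tau : Nidx -> option bool) :
  generic a -> separated_seq y -> finite_partial tau ->
  infinite_set [set tk : Nidx | extends (fun sd => gamma a y tk sd) tau].
Proof.
move=> gen_a sep_y /finite_partial_dom[D domD].
have [W sepW] :=
  finite_separates (flatten (map fst D)) (separated_seq_neq sep_y).
pose key (p : Nidx) : Key := (code y (0 :: W) p.1, p.2).
have inj_key : {in D &, injective key}.
  apply/key_inj_in/(code_inj_cols (mem_head 0 W)).
  by apply: separatesS sepW => i iW; rewrite inE iW orbT.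
apply: (@unbounded_infinite _ _ snd) => n.
have [d nd [_ agr]] := gen_a [::] [seq (key p, odflt false (tau p)) | p <- D] n.
by exists (0 :: W, d) => //; exact: agrees_extends agr.
Qed.

Lemma generic_infinite_joint_extensions (a : Aspace) x y
    (tau1 tau2 : Nidx -> option bool) :
  generic a -> separated_seq x -> injective_seq y ->
  finite_partial tau1 -> finite_partial tau2 ->
  infinite_set [set sd : Nidx | extends (fun tk => gamma a y tk sd) tau1 /\
                                extends (fun tk => gamma a x sd tk) tau2].
Proof.
move=> gen_a sep_x inj_y.
move=> /finite_partial_dom[D1 domD1] /finite_partial_dom[D2 domD2].
have [W1 sepW1] :=
  finite_separates (flatten (map fst D1)) (injective_seq_neq inj_y).
have [W2 sepW2] :=
  finite_separates (flatten (map fst D2)) (separated_seq_neq sep_x).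
pose s := 0 :: W1 ++ W2.
pose key1 (p : Nidx) : Key := (code y p.1 s, p.2).
pose key2 (p : Nidx) : Key := (code x s p.1, p.2).
have inj_key1 : {in D1 &, injective key1}.
  apply/key_inj_in/code_inj_rows.
  by apply: separatesS sepW1 => i iW; rewrite inE mem_cat iW orbT.
have inj_key2 : {in D2 &, injective key2}.
  apply/key_inj_in/(code_inj_cols (mem_head 0 _)).
  by apply: separatesS sepW2 => i iW; rewrite inE mem_cat iW !orbT.
apply: (@unbounded_infinite _ _ snd) => n.
have [d nd [agr1 agr2]] := gen_a [seq (key1 p, odflt false (tau1 p)) | p <- D1]
  [seq (key2 p, odflt false (tau2 p)) | p <- D2] n.
exists (s, d) => //.
by split; [exact: agrees_extends agr1 | exact: agrees_extends agr2].
Qed.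

Theorem lemma4p3 :
  comeager [set alpha : Aspace |
    forall x y : nat -> nat -> bool,
      separated_seq x -> injective_seq y -> separated_seq y ->
      (forall tau : Nidx -> option bool, finite_partial tau ->
         infinite_set [set tk : Nidx |
           extends (fun sd => gamma alpha y tk sd) tau])
      /\
      (forall tau1 tau2 : Nidx -> option bool,
         finite_partial tau1 -> finite_partial tau2 ->
         infinite_set [set sd : Nidx |
           extends (fun tk => gamma alpha y tk sd) tau1 /\
           extends (fun tk => gamma alpha x sd tk) tau2])].
Proof.
apply: comeagerS comeager_generic => a gen_a x y sep_x inj_y sep_y; split.
  by move=> tau; exact: generic_infinite_extensions.
by move=> tau1 tau2; exact: generic_infinite_joint_extensions.
Qed.
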